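(* Let $P$, $h$ (fixed), $\ell$, $C$, $S$ ($n$ i.i.d. samples from $P$), the partition $\mathcal{Z}_1,\dots,\mathcal{Z}_K$, and constants $\gamma\ge1$, $\delta>0$, $\alpha\in[0,\frac{\gamma n(K+\gamma n)}{K(4n-3)}]$ be as in the context. Let $\hat S=\mathcal{T}(S)$ be the result of applying a transformation method $\mathcal{T}$, independent of $h$, to the samples of $S$. For $i\in T$ let $\hat S_i=\hat S\cap\mathcal{Z}_i$, $m_i=|\hat S_i|$, $m=\sum_{i\in T}m_i$, $\bar\epsilon_i=\frac{1}{m_in_i}\sum_{z\in S_i,\,s\in\hat S_i}|\ell(h,z)-\ell(h,s)|$, and $\bar\epsilon(h)=\sum_{i\in T}\frac{m_i}{m}\bar\epsilon_i$. If $\frac{n_i}{n}=\frac{m_i}{m}$ for every $i\in T$, then with probability at least $1-\gamma^{-\alpha}-\delta$, $$F(P,h)\le\bar\epsilon(h)+F(\hat S,h)+C\sqrt{\hat u\,\alpha\ln\gamma}+g(\delta/2).$$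
   Context: $F(P,h)=\mathbb{E}_{z\sim P}[\ell(h,z)]$, and for a finite dataset $A$, $F(A,h)=\frac1{|A|}\sum_{z\in A}\ell(h,z)$. $\ell\ge0$, $C=\sup_z\ell(h,z)<\infty$. $S_i=S\cap\mathcal{Z}_i$, $n_i=|S_i|$, $T=\{i\in[K]:S\cap\mathcal{Z}_i\ne\emptyset\}$. $\hat u=\frac{\gamma}{2n}+\frac{\gamma^2}{2}\sum_{i=1}^K(n_i/n)^2+\gamma^2\sqrt{\frac2n\ln\frac{2K}{\delta}}$ and $g(\delta)=C(\sqrt2+1)\sqrt{\frac{|T|\ln(2K/\delta)}{n}}+\frac{2C|T|\ln(2K/\delta)}{n}$.
   Formalization: The bound is also conditioned on every point of $\hat S$ lying in some $\mathcal{Z}_i$ with i ∈ T, a premise checked, like $\frac{n_i}{n}=\frac{m_i}{m}$, sample by sample on the event. Apart from conventions, each condition added here is assumed in the paper as well or is needed for the statement above to hold. *)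

From HB Require Import structures.
From mathcomp Require Import all_boot all_order all_algebra.
From mathcomp Require Import all_classical all_reals all_analysis.
Set Implicit Arguments. Unset Strict Implicit. Unset Printing Implicit Defensive.
Import Order.TTheory GRing.Theory Num.Theory.
Import numFieldNormedType.Exports.
Local Open Scope classical_set_scope.
Local Open Scope ring_scope.

Section Defs.
Context {R : realType}.

Definition mutually_independent {dO dZ} {Omega : measurableType dO}
  {Z : measurableType dZ} (Pr : probability Omega R) (n : nat)
  (X : 'I_n -> Omega -> Z) : Prop :=
  forall (J : {set 'I_n}) (A : 'I_n -> set Z),
    (forall j, measurable (A j)) ->
    Pr [set w | forall j, j \in J -> A j (X j w)] =
    (\prod_(j in J) Pr (X j @^-1` A j))%E.

Definition iid_sample {dO dZ} {Omega : measurableType dO}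
  {Z : measurableType dZ} (Pr : probability Omega R) (P : probability Z R)
  (n : nat) (X : 'I_n -> Omega -> Z) : Prop :=
  [/\ forall j, measurable_fun setT (X j),
      forall j (A : set Z), measurable A -> Pr (X j @^-1` A) = P A
    & mutually_independent Pr X].

(* F(A,h) for a finite dataset A (a multiset, given as a sequence) *)
Definition emp_risk {Z : Type} (f : Z -> R) (A : seq Z) : R :=
  (size A)%:R^-1 * \sum_(z <- A) f z.

Definition cell {Z : Type} (Zc : set Z) (A : seq Z) : seq Z :=
  [seq z <- A | z \in Zc].

Definition occupied {Z : Type} (K : nat) (Zc : 'I_K -> set Z) (S : seq Z)
  : {set 'I_K} := [set i | (0 < size (cell (Zc i) S))%N].

Definition u_hat {Z : Type} (K : nat) (Zc : 'I_K -> set Z) (S : seq Z)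
  (gamma delta : R) : R :=
  let n := (size S)%:R in
  gamma / (2 * n)
  + gamma ^+ 2 / 2 * \sum_(i < K) ((size (cell (Zc i) S))%:R / n) ^+ 2
  + gamma ^+ 2 * Num.sqrt (2 / n * ln (2 * K%:R / delta)).

Definition g_bound {Z : Type} (K : nat) (Zc : 'I_K -> set Z) (S : seq Z)
  (C delta : R) : R :=
  let n := (size S)%:R in
  let t := #|occupied Zc S|%:R in
  C * (Num.sqrt 2 + 1) * Num.sqrt (t * ln (2 * K%:R / delta) / n)
  + 2 * C * t * ln (2 * K%:R / delta) / n.

Definition eps_cell {Z : Type} (f : Z -> R) (Zc : set Z) (S Shat : seq Z) : R :=
  ((size (cell Zc Shat))%:R * (size (cell Zc S))%:R)^-1 *
  \sum_(z <- cell Zc S) \sum_(s <- cell Zc Shat) `|f z - f s|.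

Definition m_total {Z : Type} (K : nat) (Zc : 'I_K -> set Z) (S Shat : seq Z) : nat :=
  (\sum_(i in occupied Zc S) size (cell (Zc i) Shat))%N.

Definition eps_bar {Z : Type} (f : Z -> R) (K : nat) (Zc : 'I_K -> set Z)
  (S Shat : seq Z) : R :=
  \sum_(i in occupied Zc S)
     ((size (cell (Zc i) Shat))%:R / (m_total Zc S Shat)%:R) * eps_cell f (Zc i) S Shat.

End Defs.

From HB Require Import structures.
From mathcomp Require Import all_boot all_order all_algebra.
From mathcomp Require Import all_classical all_reals all_analysis.
From mathcomp Require Import lra ring measurable_realfun.
Import Order.TTheory GRing.Theory Num.Theory.
Import numFieldNormedType.Exports.
Local Open Scope classical_set_scope.
Local Open Scope ring_scope.
Set Implicit Arguments. Unset Strict Implicit. Unset Printing Implicit Defensive.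

(* The terms gamma^(-alpha) and C * sqrt(u_hat * alpha * ln gamma) only weaken
   the statement: the bound is proved on an event of probability at least 1 - delta without
   them.  When n_i/n = m_i/m, the empirical risks of S and of Shat decompose over the occupied
   cells with the same weights, and in each cell the difference of the two averages is at most
   eps_i (compare every point of S_i with every point of Shat_i).  It remains to show the
   one-sided Hoeffding bound F(P,h) <= F(S,h) + C (2a + a^2) with probability 1 - exp(-n a^2);
   for a = sqrt(ln(1/delta)/n) this radius is at most g(delta/2).  Independence is only
   available for events, so the loss is discretized into bins of width C a^2: the bin indices
   of the sample are i.i.d. and finite-valued, and the Chernoff bound for them follows from
   exp(-y) <= 1 - y + y^2 for y >= 0. *)

Section ChernoffFinite.
Variable R : realType.

Lemma expRN_le_quadratic {y : R} : 0 <= y -> expR (- y) <= 1 - y + y ^+ 2.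
Proof.
move=> y0.
have sq_le : (1 + y / 2) ^+ 2 <= expR y.
  rewrite [in expR y](splitr y) expRD -expr2 lerXn2r ?nnegrE ?expR_ge0 //.
    lra.
  exact: expR_ge1Dx.
have pos : 0 < (1 + y / 2) ^+ 2 by apply: exprn_gt0; lra.
apply: (le_trans (y := ((1 + y / 2) ^+ 2)^-1)).
  by rewrite expRN lef_pV2 ?posrE ?expR_gt0.
(* (1 + y/2)^2 (1 - y + y^2) = 1 + y^2/4 + 3y^3/4 + y^4/4 >= 1 *)
rewrite -[_^-1]mulr1 ler_pdivrMl //; nra.
Qed.

Variables (N : nat) (p x : 'I_N -> R) (C : R).
Hypotheses (p_ge0 : forall k, 0 <= p k) (p_sum1 : \sum_(k < N) p k = 1)
  (x_bnd : forall k, 0 <= x k <= C).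

Lemma sum_expRN_le (lam : R) : 0 <= lam ->
  \sum_(k < N) expR (- (lam * x k)) * p k <=
  expR (- (lam * \sum_(k < N) x k * p k) + (lam * C) ^+ 2).
Proof.
move=> lam0.
apply: (le_trans (y := \sum_(k < N) (1 - lam * x k + (lam * C) ^+ 2) * p k)).
  apply: ler_sum => k _; rewrite ler_wpM2r //.
  have /andP [xk0 xkC] := x_bnd k.
  have lx0 : 0 <= lam * x k by exact: mulr_ge0.
  apply: le_trans (expRN_le_quadratic lx0) _; rewrite lerD2l lerXn2r ?nnegrE ?ler_wpM2l //.
  exact: mulr_ge0 (le_trans xk0 xkC).
rewrite (eq_bigr (fun k => p k - lam * (x k * p k) + (lam * C) ^+ 2 * p k)); last first.
  by move=> k _; ring.
rewrite !big_split sumrN /= -!mulr_sumr p_sum1 mulr1 -addrA -mulrN.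
exact: expR_ge1Dx.
Qed.

Lemma chernoff_finite (n : nat) (a : R) : 0 < C -> 0 <= a ->
  \sum_(v : {ffun 'I_n -> 'I_N} |
      \sum_(j < n) x (v j) < n%:R * (\sum_(k < N) x k * p k - 2 * C * a))
    \prod_(j < n) p (v j) <= expR (- (n%:R * a ^+ 2)).
Proof.
move=> C_gt0 a_ge0.
set b := \sum_(k < N) x k * p k.
set lam := a / C.
have lam0 : 0 <= lam by rewrite divr_ge0 // ltW.
have lamC : lam * C = a by rewrite divfK // gt_eqF.
set M := \sum_(k < N) expR (- (lam * x k)) * p k.
pose tilt (v : {ffun 'I_n -> 'I_N}) := \prod_(j < n) (expR (- (lam * x (v j))) * p (v j)).
have tilt_ge0 v : 0 <= tilt v.
  by apply: prodr_ge0 => j _; rewrite mulr_ge0 ?expR_ge0.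
have markov (v : {ffun 'I_n -> 'I_N}) : \sum_(j < n) x (v j) < n%:R * (b - 2 * C * a) ->
    \prod_(j < n) p (v j) <= expR (lam * (n%:R * (b - 2 * C * a))) * tilt v.
  move=> bad; rewrite /tilt big_split /= -expR_sum (mulrA (expR _)) -expRD.
  rewrite -[X in X <= _]mul1r ler_wpM2r ?prodr_ge0 // leNgt expR_lt1 -leNgt.
  by rewrite sumrN -mulr_sumr -mulrBr mulr_ge0 // subr_ge0 ltW.
apply: (le_trans (ler_sum _ markov)); rewrite -mulr_sumr.
apply: (le_trans (y := expR (lam * (n%:R * (b - 2 * C * a))) * M ^+ n)).
  have -> : M ^+ n = \prod_(j < n) M by rewrite prodr_const card_ord.
  rewrite ler_wpM2l ?expR_ge0 // /M bigA_distr_bigA /=.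
  rewrite [leRHS](bigID (fun v : {ffun _ -> _} =>
    \sum_(j < n) x (v j) < n%:R * (b - 2 * C * a))) /=.
  apply: ler_wpDr; [apply: sumr_ge0 => v _; exact: tilt_ge0 | exact: lexx].
apply: (le_trans (y := expR (lam * (n%:R * (b - 2 * C * a))) *
                       expR (- (lam * b) + (lam * C) ^+ 2) ^+ n)).
  rewrite ler_wpM2l ?expR_ge0 // lerXn2r ?nnegrE ?expR_ge0 ?sum_expRN_le //.
  by rewrite sumr_ge0 // => k _; rewrite mulr_ge0 ?expR_ge0.
rewrite -expRM_natl -expRD ler_expR lamC.
have -> : lam * (n%:R * (b - 2 * C * a)) + n%:R * (- (lam * b) + a ^+ 2)
          = - (n%:R * (2 * (lam * C) * a - a ^+ 2)) by ring.
by rewrite lamC; lra.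
Qed.

End ChernoffFinite.

Section Discretization.
Variables (R : realType) (dZ : measure_display) (Z : measurableType dZ).
Variables (P : probability Z R) (f : Z -> R) (C eta : R).
Hypotheses (f_ge0 : forall z, 0 <= f z) (f_leC : forall z, f z <= C)
  (mf : measurable_fun setT f) (C_ge0 : 0 <= C) (eta_gt0 : 0 < eta).

Let N := (Num.truncn (C / eta)).+1.

Definition bin (k : 'I_N) : set Z := [set z | k%:R * eta <= f z < k.+1%:R * eta].

Definition bin_of (z : Z) : 'I_N := inord (Num.truncn (f z / eta)).

Definition bin_prob (k : 'I_N) : R := fine (P (bin k)).

Definition bin_mean : R := \sum_(k < N) k%:R * eta * bin_prob k.

Lemma measurable_bin k : measurable (bin k).
Proof.
rewrite -[bin k]setTI.
have -> : [set: Z] `&` bin k = setT `&` f @^-1` `[k%:R * eta, k.+1%:R * eta[.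
  by apply/seteqP; split => z /=; rewrite in_itv.
exact: mf (measurable_itv _).
Qed.

Lemma bin_of_mem z : bin (bin_of z) z.
Proof.
have fz0 : 0 <= f z / eta by rewrite divr_ge0 // ltW.
have trunc_lt : (Num.truncn (f z / eta) < N)%N.
  by rewrite ltnS le_truncn // ler_pM2r ?invr_gt0.
have /andP [lo hi] := truncn_itv fz0.
by rewrite /bin /bin_of /= inordK // -ler_pdivlMr // -ltr_pdivrMr // lo hi.
Qed.

Lemma bin_trivIset : trivIset setT bin.
Proof.
suff bin_lt (k k' : 'I_N) z : (k < k')%N -> bin k z -> ~ bin k' z.
  move=> k k' _ _ [z [bk bk']]; apply: val_inj.
  case: (ltngtP k k') => // lt.
  - by case: (bin_lt _ _ _ lt bk bk').
  - by case: (bin_lt _ _ _ lt bk' bk).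
move=> kk' /andP [_ hi] /andP [lo _].
have : k.+1%:R * eta <= k'%:R * eta by rewrite ler_pM2r // ler_nat.
by lra.
Qed.

Lemma bin_le (k : 'I_N) : k%:R * eta <= C.
Proof.
have C_eta0 : 0 <= C / eta by rewrite divr_ge0 // ltW.
have /andP [lo _] := truncn_itv C_eta0.
by rewrite -ler_pdivlMr // (le_trans _ lo) // ler_nat -ltnS.
Qed.

Lemma bin_probE k : P (bin k) = (bin_prob k)%:E.
Proof. by rewrite fineK // fin_num_measure //; exact: measurable_bin. Qed.

Lemma bin_prob_ge0 k : 0 <= bin_prob k.
Proof. exact: fine_ge0. Qed.

Lemma sum_bin_prob : \sum_(k < N) bin_prob k = 1.
Proof.
have cover : \big[setU/set0]_(k < N) bin k = setT.
  apply/seteqP; split => // z _; rewrite (bigD1 (bin_of z)) //=.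
  by left; exact: bin_of_mem.
apply: EFin_inj; rewrite -sumEFin -(probability_setT P) -cover.
rewrite measure_bigsetU_ord //; [|exact: measurable_bin | exact: bin_trivIset].
by apply: eq_bigr => k _; exact/esym/bin_probE.
Qed.

Lemma integral_le_bins : (\int[P]_z (f z)%:E <= (bin_mean + eta)%:E)%E.
Proof.
pose step z := \sum_(k < N) k.+1%:R * eta * \1_(bin k) z.
have step_term_ge0 (k : 'I_N) z : 0 <= k.+1%:R * eta * \1_(bin k) z.
  by rewrite !mulr_ge0 // ltW.
have mstep_term (k : 'I_N) : measurable_fun setT (fun z => k.+1%:R * eta * \1_(bin k) z).
  apply: measurable_funM; first exact: measurable_cst.
  exact/measurable_indic/measurable_bin.
have f_le_step z : f z <= step z.
  rewrite /step (bigD1 (bin_of z)) //= big1 ?addr0; last first.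
    move=> k kz; rewrite indicE memNset ?mulr0 // => zk.
    move/eqP: kz; apply; apply: bin_trivIset => //; exists z; split => //; exact: bin_of_mem.
  rewrite indicE mem_set ?mulr1; last exact: bin_of_mem.
  by have /andP [_ /ltW] := bin_of_mem z.
apply: (@le_trans _ _ (\int[P]_z (step z)%:E)%E).
  apply: ge0_le_integral => //.
  - by move=> z _; rewrite lee_fin.
  - exact/measurable_EFinP.
  - exact/measurable_EFinP/measurable_sum.
  - by move=> z _; rewrite lee_fin.
under eq_integral do rewrite /step -sumEFin.
rewrite ge0_integral_sum //; last 2 first.
- by move=> k; exact/measurable_EFinP.
- by move=> k z _; rewrite lee_fin.
have integral_term (k : 'I_N) : (\int[P]_z (k.+1%:R * eta * \1_(bin k) z)%:E
                        = (k.+1%:R * eta * bin_prob k)%:E)%E.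
  under eq_integral do rewrite EFinM.
  rewrite ge0_integralZl //; last by rewrite lee_fin mulr_ge0 // ltW.
    rewrite integral_indic // ?setIT ?EFinM; last exact: measurable_bin.
    by congr (_ * _)%E; exact: bin_probE.
  exact/measurable_EFinP/measurable_indic/measurable_bin.
rewrite (eq_bigr _ (fun k _ => integral_term k)) sumEFin lee_fin le_eqVlt.
apply/orP; left; apply/eqP.
under eq_bigr do rewrite -natr1 !mulrDl mul1r.
by rewrite big_split /= -mulr_sumr sum_bin_prob mulr1.
Qed.

End Discretization.

Arguments bin {R dZ Z} f C eta k.
Arguments bin_of {R dZ Z} f C eta z.
Arguments bin_prob {R dZ Z} P f C eta k.
Arguments bin_mean {R dZ Z} P f C eta.

Lemma iid_sample_bigcap (R : realType) (dZ : measure_display) (Z : measurableType dZ)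
    (P : probability Z R) (n : nat) (dO : measure_display) (Omega : measurableType dO)
    (Pr : probability Omega R) (X : 'I_n -> Omega -> Z) (A : 'I_n -> set Z) :
  iid_sample Pr P X -> (forall j, measurable (A j)) ->
  Pr (\bigcap_j (X j @^-1` A j)) = (\prod_(j < n) P (A j))%E.
Proof.
move=> [_ lawX indepX] mA; have := indepX [set: 'I_n]%SET A mA.
have -> : [set w | forall j, j \in [set: 'I_n]%SET -> A j (X j w)] = \bigcap_j (X j @^-1` A j).
  by apply/seteqP; split => w /= H j _; apply: H; rewrite ?finset.in_setT.
move=> ->; rewrite (eq_bigl xpredT) => [|j]; last by rewrite finset.in_setT.
by apply: eq_bigr => j _; exact: lawX.
Qed.

Lemma binned_sample_lower_tail (R : realType) (dZ : measure_display) (Z : measurableType dZ)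
    (P : probability Z R) (f : Z -> R) (C eta : R) (n : nat) (dO : measure_display)
    (Omega : measurableType dO) (Pr : probability Omega R) (X : 'I_n -> Omega -> Z) (a : R) :
  (forall z, 0 <= f z) -> (forall z, f z <= C) -> measurable_fun setT f ->
  iid_sample Pr P X -> 0 < C -> 0 < eta -> 0 <= a ->
  exists E : set Omega, [/\ measurable E,
    ((1 - expR (- (n%:R * a ^+ 2)))%:E <= Pr E)%E &
    forall w, E w ->
      n%:R * (bin_mean P f C eta - 2 * C * a)
      <= \sum_(j < n) (bin_of f C eta (X j w))%:R * eta].
Proof.
move=> f_ge0 f_leC mf iid C_gt0 eta_gt0 a_ge0.
pose N := (Num.truncn (C / eta)).+1.
pose x (k : 'I_N) := k%:R * eta.
pose p := bin_prob P f C eta.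
pose cyl (v : {ffun 'I_n -> 'I_N}) := \bigcap_j (X j @^-1` bin f C eta (v j)).
pose bad : {pred {ffun 'I_n -> 'I_N}} := fun v =>
  \sum_(j < n) x (v j) < n%:R * (\sum_k x k * p k - 2 * C * a).
pose Ebad := \bigcup_(v in [set` bad]) cyl v.
have mcyl v : measurable (cyl v).
  apply: fin_bigcap_measurable => // j _; rewrite -[X in measurable X]setTI.
  by case: iid => mX _ _; exact/mX/measurable_bin.
have Pr_cyl v : Pr (cyl v) = (\prod_(j < n) p (v j))%:E.
  rewrite (iid_sample_bigcap iid) -?prodEFin; last by move=> j; exact: measurable_bin.
  by apply: eq_bigr => j _; exact: bin_probE.
have mEbad : measurable Ebad by apply: fin_bigcup_measurable => // v _; exact: mcyl.
exists (~` Ebad); split; first exact: measurableC.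
  rewrite probability_setC // EFinB; apply: leeB => //.
  apply: le_trans (content_sub_fsum Pr (D := [set` bad]) finite_finset
    (fun v _ => mcyl v) mEbad _) _ => //.
  rewrite (eq_fsbigr (fun v : {ffun 'I_n -> 'I_N} => (\prod_(j < n) p (v j))%:E))
    => [|v _]; last exact: Pr_cyl.
  rewrite -(bigfs _ (index_enum_uniq _)); last by move=> v _; rewrite mem_index_enum.
  rewrite sumEFin lee_fin; apply: chernoff_finite => //.
  - exact: bin_prob_ge0.
  - exact: sum_bin_prob.
  - by move=> k; rewrite mulr_ge0 ?ler0n ?(ltW eta_gt0) //= bin_le // ltW.
move=> w Ew; rewrite leNgt; apply/negP => bad_w; apply: Ew.
pose v := [ffun j => bin_of f C eta (X j w)].
have bad_v : bad v by rewrite /bad; under eq_bigr do rewrite ffunE.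
exists v; first exact: bad_v.
by move=> j _; rewrite /= ffunE; exact: bin_of_mem.
Qed.

Lemma integral_le_sample_mean (R : realType) (dZ : measure_display) (Z : measurableType dZ)
    (P : probability Z R) (f : Z -> R) (C : R) (n : nat) (dO : measure_display)
    (Omega : measurableType dO) (Pr : probability Omega R) (X : 'I_n -> Omega -> Z) (a : R) :
  (forall z, 0 <= f z) -> (forall z, f z <= C) -> measurable_fun setT f ->
  (0 < n)%N -> iid_sample Pr P X -> 0 <= C -> 0 < a ->
  exists E : set Omega, [/\ measurable E,
    ((1 - expR (- (n%:R * a ^+ 2)))%:E <= Pr E)%E &
    forall w, E w ->
      (\int[P]_z (f z)%:E <= ((\sum_(j < n) f (X j w)) / n%:R + C * (2 * a + a ^+ 2))%:E)%E].
Proof.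
move=> f_ge0 f_leC mf n_gt0 iid C_ge0 a_gt0.
have n_pos : 0 < n%:R :> R by rewrite ltr0n.
have [C_gt0|C_le0] := ltrP 0 C; last first.
  have -> : C = 0 by apply/le_anti; rewrite C_le0 C_ge0.
  have f0 z : f z = 0 by apply/le_anti; rewrite f_ge0 andbT (le_trans (f_leC z)).
  exists setT; split => //; first by rewrite probability_setT lee_fin lerBlDr lerDl expR_ge0.
  move=> w _; rewrite mul0r addr0 (eq_integral (fun=> 0%E)) ?integral0 ?lee_fin.
  - by rewrite divr_ge0 ?sumr_ge0.
  - by move=> z _; rewrite f0.
set eta := C * a ^+ 2.
have eta_gt0 : 0 < eta by rewrite mulr_gt0 ?exprn_gt0.
have [E [mE PrE E_tail]] := binned_sample_lower_tail f_ge0 f_leC mf iid C_gt0 eta_gt0 (ltW a_gt0).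
exists E; split => // w /E_tail tail.
apply: le_trans (integral_le_bins P f_ge0 f_leC mf eta_gt0) _; rewrite lee_fin.
have binned_le : \sum_(j < n) (bin_of f C eta (X j w))%:R * eta <= \sum_(j < n) f (X j w).
  by apply: ler_sum => j _; have /andP [] := bin_of_mem f_ge0 f_leC eta_gt0 (X j w).
have : bin_mean P f C eta <= (\sum_(j < n) f (X j w)) / n%:R + 2 * C * a.
  by rewrite -lerBlDr ler_pdivlMr // mulrC (le_trans tail).
by rewrite /eta; lra.
Qed.

Lemma emp_risk_subr_le (R : realType) (Z : Type) (f : Z -> R) (A B : seq Z) :
  (0 < size A)%N -> (0 < size B)%N ->
  emp_risk f A - emp_risk f B <=
  ((size B)%:R * (size A)%:R)^-1 * \sum_(a <- A) \sum_(b <- B) `|f a - f b|.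
Proof.
move=> A_gt0 B_gt0.
have nA0 : (size A)%:R != 0 :> R by rewrite pnatr_eq0 -lt0n.
have nB0 : (size B)%:R != 0 :> R by rewrite pnatr_eq0 -lt0n.
have sum_const (s : seq Z) (c : R) : \sum_(z <- s) c = c *+ size s.
  by rewrite big_const_seq count_predT iter_addr_0.
have -> : emp_risk f A - emp_risk f B =
          ((size B)%:R * (size A)%:R)^-1 * \sum_(a <- A) \sum_(b <- B) (f a - f b).
  rewrite (eq_bigr (fun a => f a * (size B)%:R - \sum_(b <- B) f b)); last first.
    by move=> a _; rewrite sumrB !sum_const mulr_natr.
  rewrite sumrB sum_const -mulr_suml -mulr_natr /emp_risk.
  by field; apply/andP.
rewrite ler_wpM2l ?invr_ge0 ?mulr_ge0 //.
by apply: ler_sum => a _; apply: ler_sum => b _; exact: ler_norm.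
Qed.

Section Partition.
Variables (R : realType) (Z : eqType) (K : nat) (Zc : 'I_K -> set Z).
Hypothesis Zc_disj : forall i j, i != j -> Zc i `&` Zc j = set0.

Lemma sum_cells (T : {set 'I_K}) (A : seq Z) (F : Z -> R) :
  (forall z, z \in A -> exists2 i, i \in T & Zc i z) ->
  \sum_(z <- A) F z = \sum_(i in T) \sum_(z <- cell (Zc i) A) F z.
Proof.
move=> A_cov.
under [RHS]eq_bigr do rewrite big_filter big_mkcond /=.
rewrite exchange_big /= big_seq_cond [RHS]big_seq_cond; apply: eq_bigr => z /andP [zA _].
have [i iT zi] := A_cov z zA.
rewrite (bigD1 i) //= big1 ?addr0; first by rewrite ifT //; exact/mem_set.
move=> j /andP [_ ji]; case: ifP => // /set_mem zj.
by have := Zc_disj ji; rewrite -subset0 => /(_ z (conj zj zi)).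
Qed.

Lemma emp_risk_cells (T : {set 'I_K}) (A : seq Z) (f : Z -> R) :
  (forall z, z \in A -> exists2 i, i \in T & Zc i z) ->
  emp_risk f A =
  \sum_(i in T) (size (cell (Zc i) A))%:R / (size A)%:R * emp_risk f (cell (Zc i) A).
Proof.
move=> A_cov; rewrite /emp_risk (sum_cells _ A_cov) mulr_sumr; apply: eq_bigr => i _.
have [/size0nil->|ni_gt0] := posnP (size (cell (Zc i) A)).
  by rewrite big_nil !mulr0.
rewrite mulrA; congr (_ * _).
by rewrite mulrAC mulfV ?mul1r // pnatr_eq0 -lt0n.
Qed.

Lemma size_cells (T : {set 'I_K}) (A : seq Z) :
  (forall z, z \in A -> exists2 i, i \in T & Zc i z) ->
  (size A)%:R = \sum_(i in T) (size (cell (Zc i) A))%:R :> R.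
Proof.
move=> A_cov; rewrite -sum1_size natr_sum (sum_cells _ A_cov).
by apply: eq_bigr => i _; rewrite -sum1_size natr_sum.
Qed.

Lemma mem_occupied (S : seq Z) i z : z \in S -> Zc i z -> i \in occupied Zc S.
Proof.
by move=> zS zi; rewrite inE size_filter -has_count; apply/hasP; exists z => //; exact/mem_set.
Qed.

Hypothesis Zc_cover : \bigcup_i Zc i = setT.

Lemma occupied_cover (S : seq Z) z : z \in S -> exists2 i, i \in occupied Zc S & Zc i z.
Proof.
move=> zS; have : (\bigcup_i Zc i) z by rewrite Zc_cover.
by case=> i _ zi; exists i => //; exact: mem_occupied zi.
Qed.

Lemma occupied_gt0 (S : seq Z) : (0 < size S)%N -> (0 < #|occupied Zc S|)%N.
Proof.
case: S => // z S _; have [i iT _] := @occupied_cover (z :: S) z (mem_head _ _).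
by apply/card_gt0P; exists i.
Qed.

Lemma emp_risk_le_eps_bar (f : Z -> R) (S Shat : seq Z) :
  (forall i, i \in occupied Zc S ->
     (size (cell (Zc i) S))%:R / (size S)%:R
     = (size (cell (Zc i) Shat))%:R / (m_total Zc S Shat)%:R :> R) ->
  (forall s, s \in Shat -> exists2 i, i \in occupied Zc S & Zc i s) ->
  emp_risk f S <= eps_bar f Zc S Shat + emp_risk f Shat.
Proof.
move=> same_ratio Shat_cov.
have size_Shat : (size Shat)%:R = (m_total Zc S Shat)%:R :> R.
  by rewrite (size_cells Shat_cov) natr_sum.
rewrite (emp_risk_cells f (@occupied_cover S)) (emp_risk_cells f Shat_cov) size_Shat.
rewrite -lerBlDr -sumrB; apply: ler_sum => i iT.
rewrite same_ratio // -mulrBr ler_wpM2l ?divr_ge0 //.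
have ni_gt0 : (0 < size (cell (Zc i) S))%N by move: iT; rewrite inE.
have mi_gt0 : (0 < size (cell (Zc i) Shat))%N.
  have S_gt0 : (0 < size S)%N.
    by apply: leq_trans ni_gt0 _; rewrite size_filter count_size.
  have : 0 < (size (cell (Zc i) S))%:R / (size S)%:R :> R by rewrite divr_gt0 ?ltr0n.
  rewrite same_ratio // lt0n; apply: contraTneq => ->.
  by rewrite mul0r ltxx.
exact: emp_risk_subr_le.
Qed.

End Partition.

Lemma sample_radius_le_g_bound (R : realType) (Z : Type) (K : nat) (Zc : 'I_K -> set Z)
    (S : seq Z) (C delta a : R) :
  0 <= C -> 0 < delta -> delta <= 1 -> (0 < #|occupied Zc S|)%N ->
  0 <= a -> a ^+ 2 = ln delta^-1 / (size S)%:R ->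
  C * (2 * a + a ^+ 2) <= g_bound Zc S C (delta / 2).
Proof.
move=> C_ge0 delta_gt0 delta_le1 T_gt0 a_ge0 a2.
rewrite /g_bound.
set n := (size S)%:R; set t := #|occupied Zc S|%:R; set L' := ln _.
have t_ge1 : 1 <= t :> R by rewrite ler1n.
have K_ge1 : 1 <= K%:R :> R.
  by case/card_gt0P: T_gt0 => i _; rewrite ler1n (leq_ltn_trans _ (ltn_ord i)).
have L_ge0 : 0 <= ln delta^-1 by rewrite ln_ge0 // invf_ge1.
have L_le : ln delta^-1 <= L'.
  rewrite /L' ler_ln ?posrE ?invr_gt0 ?divr_gt0 ?mulr_gt0 //; last lra.
  rewrite -[delta^-1]mul1r invf_div mulrA ler_wpM2r ?invr_ge0 ?ltW //; lra.
have a2_le : a ^+ 2 <= t * L' / n.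
  rewrite a2 ler_wpM2r ?invr_ge0 //; nra.
have a_le : a <= Num.sqrt (t * L' / n).
  by rewrite -[leLHS](ger0_norm a_ge0) -sqrtr_sqr ler_wsqrtr.
have sqrt2_ge1 : 1 <= Num.sqrt 2 :> R by rewrite -[leLHS]sqrtr1 ler_wsqrtr // ler1n.
have s_ge0 : 0 <= Num.sqrt (t * L' / n) by exact: sqrtr_ge0.
have lin : 2 * C * a <= C * (Num.sqrt 2 + 1) * Num.sqrt (t * L' / n).
  have -> : 2 * C * a = C * (2 * a) by ring.
  rewrite -mulrA ler_wpM2l //; nra.
have quad : C * a ^+ 2 <= 2 * C * t * L' / n.
  have -> : 2 * C * t * L' / n = C * (2 * (t * L' / n)) by ring.
  rewrite ler_wpM2l //; nra.
lra.
Qed.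

Lemma upper_bound_ge0 (R : realType) (dZ : measure_display) (Z : measurableType dZ)
    (P : probability Z R) (f : Z -> R) (C : R) :
  (forall z, 0 <= f z) -> (forall z, f z <= C) -> 0 <= C.
Proof.
move=> f_ge0 f_leC; rewrite leNgt; apply/negP => C_lt0.
have : [set: Z] = set0.
  by apply/seteqP; split => // z _; have := f_ge0 z; have := f_leC z; lra.
by move/(congr1 P); rewrite probability_setT measure0 => /eqP; rewrite eqe oner_eq0.
Qed.

Theorem theorem2 (R : realType)
  (dZ : measure_display) (Z : measurableType dZ) (P : probability Z R)
  (Tr : seq Z -> seq Z)
  (H : Type) (loss : H -> Z -> R) (h : H) (C : R)
  (K : nat) (Zc : 'I_K -> set Z)
  (n : nat) (dO : measure_display) (Omega : measurableType dO)
  (Pr : probability Omega R) (X : 'I_n -> Omega -> Z)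
  (gamma delta alpha : R) :
  (forall h' z, 0 <= loss h' z) ->
  measurable_fun setT (loss h) ->
  has_ubound (range (loss h)) ->
  C = sup (range (loss h)) ->
  (forall i, measurable (Zc i)) ->
  (forall i j, i != j -> Zc i `&` Zc j = set0) ->
  \bigcup_i Zc i = setT ->
  (0 < n)%N ->
  iid_sample Pr P X ->
  1 <= gamma -> 0 < delta ->
  0 <= alpha ->
  alpha <= gamma * n%:R * (K%:R + gamma * n%:R) / (K%:R * (4 * n%:R - 3)) ->
  exists E : set Omega, measurable E /\
    ((1 - gamma `^ (- alpha) - delta)%:E <= Pr E)%E /\
    forall w, E w ->
      let S := [seq X j w | j <- enum 'I_n] in
      let Shat := Tr S in
      let T := occupied Zc S in
      ((forall i, i \in T ->
          (size (cell (Zc i) S))%:R / n%:R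
          = (size (cell (Zc i) Shat))%:R / (m_total Zc S Shat)%:R :> R) ->
       (forall s, s \in Shat -> exists2 i, i \in T & Zc i s) ->
       (\int[P]_z (loss h z)%:E <=
          (eps_bar (loss h) Zc S Shat + emp_risk (loss h) Shat
           + C * Num.sqrt (u_hat Zc S gamma delta * alpha * ln gamma)
           + g_bound Zc S C (delta / 2))%:E)%E).
Proof.
move=> loss_ge0 mloss loss_ub C_sup _ Zc_disj Zc_cover n_gt0 iid _ delta_gt0 _ _.
set f := loss h.
have f_ge0 z : 0 <= f z := loss_ge0 h z.
have f_leC z : f z <= C by rewrite C_sup; apply: ub_le_sup => //; exists z.
have C_ge0 := upper_bound_ge0 P f_ge0 f_leC.
have pow_ge0 := powR_ge0 gamma (- alpha).
have [delta_ge1|delta_lt1] := lerP 1 delta.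
  by exists set0; split => //; split => [|w []]; rewrite measure0 lee_fin; lra.
pose a := Num.sqrt (ln delta^-1 / n%:R).
have a2 : a ^+ 2 = ln delta^-1 / n%:R.
  by rewrite sqr_sqrtr // divr_ge0 // ln_ge0 // invf_ge1 // ltW.
have a_gt0 : 0 < a by rewrite sqrtr_gt0 divr_gt0 ?ltr0n // ln_gt0 // invf_gt1.
have [E [mE PrE E_bound]] := integral_le_sample_mean f_ge0 f_leC mloss n_gt0 iid C_ge0 a_gt0.
exists E; split => //; split.
  apply: le_trans PrE; rewrite lee_fin a2 mulrC divfK ?pnatr_eq0 -?lt0n //.
  by rewrite expRN lnK ?posrE ?invr_gt0 // invrK; lra.
move=> w Ew S Shat T same_ratio Shat_cov.
have S_size : size S = n by rewrite /S size_map size_enum_ord.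
have S_gt0 : (0 < size S)%N by rewrite S_size.
rewrite -S_size in same_ratio a2.
have risk_S := emp_risk_le_eps_bar Zc_disj Zc_cover f same_ratio Shat_cov.
have radius := sample_radius_le_g_bound C_ge0 delta_gt0 (ltW delta_lt1)
  (occupied_gt0 Zc_cover S_gt0) (ltW a_gt0) a2.
apply: le_trans (E_bound w Ew) _.
rewrite lee_fin (_ : _ / _ = emp_risk f S); last first.
  by rewrite /emp_risk S_size mulrC big_map big_enum.
have := mulr_ge0 C_ge0 (sqrtr_ge0 (u_hat Zc S gamma delta * alpha * ln gamma)).
lra.
Qed.
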